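(* In the BTS-RED-Known setting, let $C_2=2/\log(1+\lambda^{-1})$. For every $t\ge1$, $$\sum_{b=1}^{b_t}\sigma_{t-1}(\boldsymbol x^{(b)}_t)\le e^{C}\sqrt{C_2\,b_t\,\mathbb I(f;\boldsymbol y_t\mid\boldsymbol y_{1:t-1})}.$$
   Context: Setting (BTS-RED-Known). $\mathcal X$ is a finite set; $k$ is a squared-exponential kernel on $\mathcal X$ (so $k(\boldsymbol x,\boldsymbol x)=1$); the unknown objective $f:\mathcal X\to\mathbb R$ lies in the RKHS $\mathcal H_k$ with $\|f\|_{\mathcal H_k}\le B$ for a known $B>0$. A known noise variance function $\sigma^2:\mathcal X\to(0,\infty)$ has maximum value $\sigma^2_{\max}$. Querying $\boldsymbol x$ once returns $f(\boldsymbol x)+\epsilon$ with $\epsilon\sim\mathcal N(0,\sigma^2(\boldsymbol x))$, independently across queries. Fix a horizon $T$, a total budget $\mathbb B\in\mathbb N$, an effective noise variance $R^2>0$, $\delta\in(0,1)$, and $\lambda=1+2/T$. GP posterior: given data pairs $(\boldsymbol x_i,y_i)_{i=1}^m$, $\mu(\boldsymbol x)=\boldsymbol k(\boldsymbol x)^\top(\boldsymbol K+\lambda I)^{-1}\boldsymbol y$ and $s^2(\boldsymbol x,\boldsymbol x')=k(\boldsymbol x,\boldsymbol x')-\boldsymbol k(\boldsymbol x)^\top(\boldsymbol K+\lambda I)^{-1}\boldsymbol k(\boldsymbol x')$, with $\boldsymbol k(\boldsymbol x)=(k(\boldsymbol x,\boldsymbol x_i))_i$, $\boldsymbol K=(k(\boldsymbol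 x_i,\boldsymbol x_j))_{ij}$, $\boldsymbol y=(y_i)_i$. $\mu_{t-1}$ and $\sigma^2_{t-1}(\cdot,\cdot)$ denote these quantities computed from all pairs collected in iterations $1,\dots,t-1$, and $\sigma_{t-1}(\boldsymbol x)=\sqrt{\sigma^2_{t-1}(\boldsymbol x,\boldsymbol x)}$. Algorithm: in iteration $t$, for $b=1,2,\dots$: draw $f^{(b)}_t$ (independently, given the past) from the Gaussian process with mean $\mu_{t-1}$ and covariance $\beta_t^2\sigma^2_{t-1}(\cdot,\cdot)$; set $\boldsymbol x^{(b)}_t\in\arg\max_{\boldsymbol x\in\mathcal X}f^{(b)}_t(\boldsymbol x)$ and $n^{(b)}_t=\lceil\sigma^2(\boldsymbol x^{(b)}_t)/R^2\rceil$; stop at the first $b$ with $\sum_{b'\le b}n^{(b')}_t\ge\mathbb B$ and set $b_t=b-1$. Each $\boldsymbol x^{(b)}_t$, $b\in[b_t]=\{1,\dots,b_t\}$, is queried $n^{(b)}_t$ times, the empirical mean $y^{(b)}_t$ of these replicates is recorded, and the pairs $(\boldsymbol x^{(b)}_t,y^{(b)}_t)_{b\in[b_t]}$ are added to the data. $\tau_{t-1}=\sum_{t'=1}^{t-1}b_{t'}$. Information gain: for a finite list of inputs $A$ with (model) observations $\boldsymbol y_A$, $\mathbb I(f;\boldsymbol y_A\mid\boldsymbol y_{1:t-1})=\tfrac12\log\det(I+\lambda^{-1}\Sigma_{t-1}(A))$ with $\Sigma_{t-1}(A)=(\sigma^2_{t-1}(\boldsymbol a,\boldsymbol a'))_{\boldsymbol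 a,\boldsymbol a'\in A}$, where $\boldsymbol y_{1:t-1}$ denotes all observations of iterations $1,\dots,t-1$ and $\boldsymbol y_t$ denotes the observations at the batch $\boldsymbol x^{(1)}_t,\dots,\boldsymbol x^{(b_t)}_t$. $C$ is a constant such that $\max_{A\subset\mathcal X,|A|\le\mathbb B}\mathbb I(f;\boldsymbol y_A\mid\boldsymbol y_{1:t-1})\le C$ for all $t\ge1$. *)

From HB Require Import structures.
From mathcomp Require Import all_boot all_order all_algebra.
From mathcomp Require Import reals sequences exp.
Set Implicit Arguments. Unset Strict Implicit. Unset Printing Implicit Defensive.
Import Order.TTheory GRing.Theory Num.Theory.
Local Open Scope ring_scope.

Section BTSRED.
Variables (R : realType) (X : finType).

Definition se_kernel (d : nat) (emb : X -> 'rV[R]_d) (ell : R) (x x' : X) : R :=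
  expR (- (\sum_(i < d) (emb x 0 i - emb x' 0 i) ^+ 2) / (2 * ell ^+ 2)).

Variables (k : X -> X -> R) (lam : R).

Definition gram (D : seq X) : 'M[R]_(size D) :=
  \matrix_(i, j) k (tnth (in_tuple D) i) (tnth (in_tuple D) j).

Definition post_cov (D : seq X) (x x' : X) : R :=
  k x x' - (\row_i k x (tnth (in_tuple D) i)
             *m invmx (gram D + lam%:M)
             *m \col_j k (tnth (in_tuple D) j) x') 0 0.

Definition post_sd (D : seq X) (x : X) : R := Num.sqrt (post_cov D x x).

Definition post_cov_mx (D A : seq X) : 'M[R]_(size A) :=
  \matrix_(i, j) post_cov D (tnth (in_tuple A) i) (tnth (in_tuple A) j).

(* I(f; y_A | data at D) = 1/2 log det(I + lam^-1 Sigma(A)) *)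
Definition info_gain (D A : seq X) : R :=
  2^-1 * ln (\det (1%:M + lam^-1 *: post_cov_mx D A)).

End BTSRED.

Definition data_before (X : Type) (x : nat -> nat -> X) (bt : nat -> nat)
    (t : nat) : seq X :=
  flatten [seq [seq x t' b | b <- iota 1 (bt t')] | t' <- iota 1 t.-1].

Definition batch (X : Type) (x : nat -> nat -> X) (bt : nat -> nat) (t : nat)
  : seq X := [seq x t b | b <- iota 1 (bt t)].

From mathcomp Require Import all_boot all_order all_algebra.
From mathcomp Require Import all_classical all_reals all_analysis.
From mathcomp Require Import ring lra.
Import Order.TTheory GRing.Theory Num.Theory.
Set Implicit Arguments. Unset Strict Implicit. Unset Printing Implicit Defensive.
Local Open Scope ring_scope.

(* The posterior covariance [Sigma] of the batch is a Schur complement of the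
   regularised Gram matrix of data and batch, hence positive semidefinite: the
   squared-exponential kernel is a positive rescaling of the exponential of a dot
   product, a limit of nonnegative combinations of powers of dot products.  For positive semidefinite [S],
   det(I + S) >= 1 + tr S, so y := det(I + Sigma / lam) satisfies
   tr Sigma <= lam (y - 1) <= lam y ln y <= e^(2C) ln y / ln(1 + 1/lam), using
   ln y = 2 I <= 2 C and lam ln(1 + 1/lam) <= 1.  Cauchy-Schwarz bounds the sum of
   the posterior deviations by sqrt(b_t tr Sigma).  The bound C applies because the
   batch has at most [budget] points, each costing at least one replicate. *)

Definition psdmx {R : numDomainType} {n} (S : 'M[R]_n) :=
  forall v : 'rV_n, 0 <= (v *m S *m v^T) 0 0.

Lemma det_block_scalar (F : fieldType) n (c : F) (u : 'rV_n) (v : 'cV_n) (D : 'M[F]_n) :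
  c != 0 -> \det (block_mx c%:M u v D) = c * \det (D - c^-1 *: (v *m u)).
Proof.
move=> c0; pose E := block_mx (1%:M : 'M[F]_1) 0 (- (c^-1 *: v)) (1%:M : 'M[F]_n).
have EM : E *m block_mx c%:M u v D = block_mx c%:M u 0 (D - c^-1 *: (v *m u)).
  rewrite mulmx_block !mul1mx !mul0mx !addr0 !mulNmx mul_mx_scalar scalerA mulfV //.
  by rewrite scale1r addNr -scalemxAl addrC.
have := congr1 determinant EM.
by rewrite det_mulmx det_lblock !det1 !mul1r det_ublock det_scalar1.
Qed.

Section PsdMatrices.
Variable R : realFieldType.

Lemma mulmx_row_block_tr n1 n2 (A : 'M[R]_n1) (B : 'M[R]_(n1, n2)) (C : 'M[R]_(n2, n1))
    (D : 'M[R]_n2) (p : 'rV_n1) (v : 'rV_n2) :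
  row_mx p v *m block_mx A B C D *m (row_mx p v)^T =
  p *m A *m p^T + v *m C *m p^T + p *m B *m v^T + v *m D *m v^T.
Proof. by rewrite mul_row_block tr_row_mx mul_row_col !mulmxDl addrA. Qed.

Lemma dotmx_self_ge0 n (u : 'rV[R]_n) : 0 <= (u *m u^T) 0 0.
Proof. by rewrite mxE sumr_ge0 // => i _; rewrite mxE -expr2 sqr_ge0. Qed.

Lemma dotmx_self_gt0 n (u : 'rV[R]_n) : u != 0 -> 0 < (u *m u^T) 0 0.
Proof.
move=> u0; rewrite lt_def dotmx_self_ge0 andbT; apply: contra u0.
rewrite mxE => /eqP u2; apply/eqP/rowP => i.
have sq0 j : 0 <= u 0 j * u^T j 0 by rewrite mxE -expr2 sqr_ge0.
have /eqP := psumr_eq0P (fun j _ => sq0 j) u2 (i := i) isT.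
by rewrite mxE -expr2 sqrf_eq0 mxE => /eqP.
Qed.

Lemma psdmxD n (A B : 'M[R]_n) : psdmx A -> psdmx B -> psdmx (A + B).
Proof.
by move=> pA pB v; rewrite mulmxDr mulmxDl mxE addr_ge0.
Qed.

Lemma psdmx_block_diag n1 n2 (A : 'M[R]_n1) (D : 'M[R]_n2) :
  psdmx A -> psdmx D -> psdmx (block_mx A 0 0 D).
Proof.
move=> pA pD v; rewrite -[v]hsubmxK mulmx_row_block_tr !mulmx0 !mul0mx !addr0.
by rewrite mxE addr_ge0.
Qed.

Lemma psdmx_scalar n (c : R) : 0 <= c -> psdmx (c%:M : 'M[R]_n).
Proof.
by move=> c0 v; rewrite mul_mx_scalar -scalemxAl mxE mulr_ge0 ?dotmx_self_ge0.
Qed.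

Lemma psdmx0 n : psdmx (0 : 'M[R]_n).
Proof. by rewrite -(scale0r 1%:M) scalemx1; exact: psdmx_scalar. Qed.

Lemma psdmxZ n (c : R) (S : 'M[R]_n) : 0 <= c -> psdmx S -> psdmx (c *: S).
Proof. by move=> c0 pS v; rewrite -scalemxAr -scalemxAl mxE mulr_ge0. Qed.

Lemma psdmx_diag_ge0 n (S : 'M[R]_n) i : psdmx S -> 0 <= S i i.
Proof.
by move=> /(_ (delta_mx 0 i)); rewrite trmx_delta -mulmxA -colE -rowE !mxE.
Qed.

Lemma psdmxD_scalar_unit n (K : 'M[R]_n) (c : R) :
  psdmx K -> 0 < c -> K + c%:M \in unitmx.
Proof.
move=> pK c0; rewrite unitmxE unitfE; apply/negP => /det0P [v v0 vK].
have := pK v; have := mulr_gt0 c0 (dotmx_self_gt0 v0).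
have : (v *m (K + c%:M) *m v^T) 0 0 = 0 by rewrite vK mul0mx mxE.
rewrite mulmxDr mulmxDl mul_mx_scalar -scalemxAl.
move: (v *m K *m v^T) (v *m v^T) => P Q; rewrite !mxE; lra.
Qed.

(* Test the block matrix against [(- v B^T M^-1, v)]: the cross terms collapse onto the Schur complement. *)
Lemma psdmx_schur m n (M : 'M[R]_m) (B : 'M[R]_(m, n)) (N : 'M[R]_n) :
  M \in unitmx -> M^T = M -> psdmx (block_mx M B B^T N) ->
  psdmx (N - B^T *m invmx M *m B).
Proof.
move=> uM sM pMN v; set u := v *m B^T *m invmx M.
set P := v *m B^T *m invmx M *m B *m v^T.
have uT : u^T = invmx M *m B *m v^T by rewrite !trmx_mul trmx_inv sM trmxK mulmxA.
have e1 : - u *m M *m (- u)^T = P.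
  by rewrite linearN /= !mulNmx mulmxN opprK /u mulmxKV // uT !mulmxA.
have e2 : v *m B^T *m (- u)^T = - P by rewrite linearN /= mulmxN uT !mulmxA.
have e3 : - u *m B *m v^T = - P by rewrite !mulNmx.
have := pMN (row_mx (- u) v); rewrite mulmx_row_block_tr e1 e2 e3 mulmxBr mulmxBl !mulmxA.
rewrite -/P; clear e1 e2 e3; move: P (v *m N *m v^T) => P W; rewrite !mxE; lra.
Qed.

Lemma quad_ge0_discr (a b s : R) :
  0 <= a -> (forall c, 0 <= c ^+ 2 * a + 2 * c * b + s) -> b ^+ 2 <= a * s.
Proof.
move=> a0 quad; have s0 : 0 <= s by have := quad 0; rewrite expr2 !(mul0r, mulr0, add0r).
have [a_0|an0] := eqVneq a 0.
  rewrite a_0 mul0r; have [->|b0] := eqVneq b 0; first by rewrite expr0n.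
  have := quad (- (s + 1) / (2 * b)).
  by rewrite a_0 mulr0 add0r (_ : 2 * _ * b = - (s + 1)); [lra | field; rewrite b0].
have ap : 0 < a by rewrite lt_def an0.
set u := b / a; have bu : b = u * a by rewrite divfK.
have := quad (- u); rewrite bu; clearbody u; nra.
Qed.

Section PsdBlock.
Variables (n : nat) (a : R) (w : 'cV[R]_n) (S : 'M[R]_n).
Hypothesis psdS : psdmx (block_mx a%:M w^T w S).

Lemma psd_block_quad c (v : 'rV[R]_n) :
  0 <= c ^+ 2 * a + 2 * c * (v *m w) 0 0 + (v *m S *m v^T) 0 0.
Proof.
have := psdS (row_mx c%:M v); rewrite mulmx_row_block_tr tr_scalar_mx.
rewrite !mul_scalar_mx !mul_mx_scalar -scalemxAl -trmx_mul.
move: (v *m w) (v *m S *m v^T) => z Q; rewrite !mxE eqxx mulr1n; lra.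
Qed.

Lemma psd_block_corner_ge0 : 0 <= a.
Proof.
by have := psd_block_quad 1 0; rewrite !mul0mx !mxE expr1n mul1r mulr0 !addr0.
Qed.

Lemma psd_block_discr (v : 'rV[R]_n) : (v *m w) 0 0 ^+ 2 <= a * (v *m S *m v^T) 0 0.
Proof. exact: quad_ge0_discr psd_block_corner_ge0 (psd_block_quad ^~ v). Qed.

Lemma psdmx_block_sub_rank1 : psdmx (S - (1 + a)^-1 *: (w *m w^T)).
Proof.
move=> v; have a0 := psd_block_corner_ge0.
have Q0 : 0 <= (v *m S *m v^T) 0 0.
  by have := psd_block_quad 0 v; rewrite expr2 !(mul0r, mulr0, add0r).
have -> : (v *m (S - (1 + a)^-1 *: (w *m w^T)) *m v^T) 0 0 =
    (v *m S *m v^T) 0 0 - (v *m w) 0 0 ^+ 2 / (1 + a).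
  rewrite mulmxBr mulmxBl -scalemxAr -scalemxAl (mulmxA v w) -(mulmxA (v *m w)).
  rewrite -trmx_mul; move: (v *m S *m v^T) (v *m w) => Q z.
  by rewrite !mxE big_ord1 !mxE; ring.
rewrite subr_ge0 ler_pdivrMr ?ltr_pwDl //.
have := psd_block_discr v; nra.
Qed.

Lemma psd_block_sum_sqr : \sum_i w i 0 ^+ 2 <= a * \tr S.
Proof.
rewrite /mxtrace mulr_sumr; apply: ler_sum => i _.
by have := psd_block_discr (delta_mx 0 i); rewrite trmx_delta -mulmxA -colE -!rowE !mxE.
Qed.

End PsdBlock.

(* Eliminating the first row turns det(1 + S) into (1 + a) det(1 + T) with
   T = S' - w w^T / (1 + a), which is again positive semidefinite. *)
Lemma det1D_ge_1Dtr n (S : 'M[R]_n) :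
  S^T = S -> psdmx S -> 1 + \tr S <= \det (1%:M + S).
Proof.
elim: n S => [|n IH] S symS psdS; first by rewrite det_mx00 /mxtrace big_ord0 addr0.
have [a [w [S' [eS symS']]]] : exists a (w : 'cV[R]_n) (S' : 'M[R]_n),
    (S : 'M[R]_(1 + n)) = block_mx a%:M w^T w S' /\ S'^T = S'.
  exists (ulsubmx (S : 'M[R]_(1 + n)) 0 0), (dlsubmx (S : 'M[R]_(1 + n))).
  exists (drsubmx (S : 'M[R]_(1 + n))); rewrite trmx_drsub trmx_dlsub symS.
  by rewrite -mx11_scalar submxK.
change (1 + @mxtrace R (1 + n) S <= \det ((1%:M : 'M[R]_(1 + n)) + S)).
change (psdmx (S : 'M[R]_(1 + n))) in psdS; rewrite eS in psdS *.
set T := S' - (1 + a)^-1 *: (w *m w^T).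
have a0 := psd_block_corner_ge0 psdS.
have symT : T^T = T by rewrite /T linearB /= symS' linearZ /= trmx_mul trmxK.
have := IH T symT (psdmx_block_sub_rank1 psdS).
have trT : \tr T = \tr S' - (1 + a)^-1 * \sum_i w i 0 ^+ 2.
  rewrite /T linearB /= mxtraceZ mxtrace_mulC /mxtrace big_ord1 mxE.
  by congr (_ - _ * _); apply: eq_bigr => i _; rewrite !mxE expr2.
rewrite mxtrace_block mxtrace_scalar mulr1n (scalar_mx_block 1 n 1) add_block_mx.
rewrite !add0r -(raddfD (@scalar_mx R 1)) det_block_scalar ?gt_eqF ?ltr_pwDl //.
rewrite addrA -/T trT; have := psd_block_sum_sqr psdS.
move: (\det _) (\tr S') (\sum_i _) => dT t s2 s2t dT_ge.
have : (1 + a) * ((1 + a)^-1 * s2) = s2 by rewrite mulrA mulfV ?gt_eqF ?ltr_pwDl ?mul1r.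
move: ((1 + a)^-1 * s2) dT_ge => z dT_ge; nra.
Qed.

End PsdMatrices.

Lemma quad_form_sum (R : comPzRingType) n (K : 'M[R]_n) (c : 'rV_n) :
  (c *m K *m c^T) 0 0 = \sum_i \sum_j c 0 i * c 0 j * K i j.
Proof.
rewrite mxE; under eq_bigr do rewrite !mxE mulr_suml.
by rewrite exchange_big /=; apply: eq_bigr => i _; apply: eq_bigr => j _; ring.
Qed.

Section ExpDotKernel.
Local Open Scope classical_set_scope.
Variable R : realType.

(* [(z_i . z_j)^m] is the inner product of the m-fold tensor powers of z_i and z_j. *)
Lemma sum_dot_pow_ge0 n d m (c : 'I_n -> R) (z : 'I_n -> 'I_d -> R) :
  0 <= \sum_i \sum_j c i * c j * (\sum_l z i l * z j l) ^+ m.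
Proof.
pose P i (f : {ffun 'I_m -> 'I_d}) := \prod_r z i (f r).
have tensor i j : (\sum_l z i l * z j l) ^+ m = \sum_f P i f * P j f.
  rewrite -[m in LHS]card_ord -prodr_const bigA_distr_bigA /=.
  by apply: eq_bigr => f _; rewrite /P -big_split.
under eq_bigr do under eq_bigr do rewrite tensor mulr_sumr.
have -> : \sum_i \sum_j \sum_f c i * c j * (P i f * P j f) =
          \sum_f (\sum_i c i * P i f) ^+ 2.
  rewrite exchange_big /=; under eq_bigr do rewrite exchange_big /=.
  rewrite exchange_big /=; apply: eq_bigr => f _.
  rewrite expr2 mulr_suml; apply: eq_bigr => i _; rewrite mulr_sumr.
  by apply: eq_bigr => j _; ring.
by apply: sumr_ge0 => f _; rewrite sqr_ge0.
Qed.

Lemma sum_expR_dot_ge0 n d (c : 'I_n -> R) (z : 'I_n -> 'I_d -> R) :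
  0 <= \sum_i \sum_j c i * c j * expR (\sum_l z i l * z j l).
Proof.
set dot := fun i j => \sum_l z i l * z j l.
pose u N := \sum_i \sum_j c i * c j * series (exp_coeff (dot i j)) N.
have cvg_u : u @ \oo --> \sum_i \sum_j c i * c j * expR (dot i j).
  apply: cvg_big => [|i _]; first exact: add_continuous.
  apply: cvg_big => [|j _]; first exact: add_continuous.
  exact: cvgMl_tmp (is_cvg_series_exp_coeff _).
rewrite -(cvg_lim _ cvg_u) //; apply: limr_ge; first exact: cvgP cvg_u.
apply: nearW => N; rewrite /u.
have -> : \sum_i \sum_j c i * c j * series (exp_coeff (dot i j)) N =
    \sum_(0 <= k < N) (k`!%:R)^-1 * \sum_i \sum_j c i * c j * dot i j ^+ k.
  rewrite /series /=.
  under eq_bigr do under eq_bigr do rewrite mulr_sumr.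
  under eq_bigr do rewrite exchange_big /=.
  rewrite exchange_big /=; apply: eq_bigr => k _.
  rewrite mulr_sumr; apply: eq_bigr => i _; rewrite mulr_sumr; apply: eq_bigr => j _.
  by rewrite /exp_coeff /=; ring.
apply: sumr_ge0 => k _; rewrite mulr_ge0 ?invr_ge0 //; exact: sum_dot_pow_ge0.
Qed.

End ExpDotKernel.

Section SqExpKernel.
Variables (R : realType) (X : finType) (d : nat) (emb : X -> 'rV[R]_d) (ell : R).
Let k := se_kernel emb ell.

Lemma se_kernelC x y : k x y = k y x.
Proof.
by rewrite /k /se_kernel; under eq_bigr do rewrite -sqrrN opprB.
Qed.

Hypothesis ell_neq0 : ell != 0.
Let z x l := emb x 0 l / ell.

Lemma se_kernel_factor x y :
  k x y = expR (- (\sum_l z x l ^+ 2) / 2) * expR (- (\sum_l z y l ^+ 2) / 2)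
          * expR (\sum_l z x l * z y l).
Proof.
rewrite /k /se_kernel -!expRD; congr expR.
have -> : \sum_(i < d) (emb x 0 i - emb y 0 i) ^+ 2 =
    ell ^+ 2 * (\sum_l z x l ^+ 2 + \sum_l z y l ^+ 2 - 2 * \sum_l z x l * z y l).
  rewrite mulr_sumr -sumrN -!big_split /= mulr_sumr.
  by apply: eq_bigr => l _; rewrite /z; field.
by field.
Qed.

Lemma se_kernel_psd n (p : 'I_n -> X) : psdmx (\matrix_(i, j) k (p i) (p j)).
Proof.
move=> c; rewrite quad_form_sum.
under eq_bigr do under eq_bigr do rewrite mxE se_kernel_factor.
set g := fun x => expR (- (\sum_l z x l ^+ 2) / 2).
have := sum_expR_dot_ge0 (fun i => c 0 i * g (p i)) (fun i => z (p i)).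
by congr (_ <= _); apply: eq_bigr => i _; apply: eq_bigr => j _; rewrite /g; ring.
Qed.

End SqExpKernel.

Section Posterior.
Variables (R : realType) (X : finType) (k : X -> X -> R) (lam : R).
Hypothesis kC : forall x y, k x y = k y x.
Hypothesis k_psd : forall n (p : 'I_n -> X), psdmx (\matrix_(i, j) k (p i) (p j)).
Hypothesis lam_gt0 : 0 < lam.

Lemma gram_sym (E : seq X) : (gram k E)^T = gram k E.
Proof. by apply/matrixP => i j; rewrite !mxE kC. Qed.

Variables (D A : seq X).
Let tD := tnth (in_tuple D).
Let tA := tnth (in_tuple A).
Let KDA := \matrix_(l < size D, j < size A) k (tD l) (tA j).

Lemma post_cov_mxE :
  post_cov_mx k lam D A = gram k A - KDA^T *m invmx (gram k D + lam%:M) *m KDA.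
Proof.
apply/matrixP => i j; rewrite !mxE /post_cov; congr (_ - _).
rewrite !mxE; apply: eq_bigr => l _; rewrite !mxE; congr (_ * _).
by apply: eq_bigr => l' _; rewrite !mxE kC.
Qed.

Let tDA (i : 'I_(size D + size A)) : X :=
  match fintype.split i with inl l => tD l | inr j => tA j end.

Lemma gram_cat_block :
  \matrix_(i, j) k (tDA i) (tDA j) = block_mx (gram k D) KDA KDA^T (gram k A).
Proof.
rewrite -[LHS]submxK; congr block_mx; apply/matrixP => i j; rewrite !mxE /tDA.
- by rewrite (unsplitK (inl i)) (unsplitK (inl j)).
- by rewrite (unsplitK (inl i)) (unsplitK (inr j)).
- by rewrite (unsplitK (inr i)) (unsplitK (inl j)) kC.
- by rewrite (unsplitK (inr i)) (unsplitK (inr j)).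
Qed.

Lemma post_cov_mx_psd : psdmx (post_cov_mx k lam D A).
Proof.
rewrite post_cov_mxE; apply: psdmx_schur.
- exact: psdmxD_scalar_unit (k_psd tD) lam_gt0.
- by rewrite linearD /= gram_sym tr_scalar_mx.
have -> : block_mx (gram k D + lam%:M) KDA KDA^T (gram k A) =
    \matrix_(i, j) k (tDA i) (tDA j) + block_mx lam%:M 0 0 0.
  by rewrite gram_cat_block add_block_mx !addr0.
apply: psdmxD; first exact: k_psd.
apply: psdmx_block_diag; [exact: psdmx_scalar (ltW lam_gt0) | exact: psdmx0].
Qed.

Lemma post_cov_mx_sym : (post_cov_mx k lam D A)^T = post_cov_mx k lam D A.
Proof.
rewrite post_cov_mxE linearB /= !trmx_mul trmxK trmx_inv linearD /= !gram_sym.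
by rewrite tr_scalar_mx mulmxA.
Qed.

End Posterior.

Lemma leq_sum_nat_gt0 m (f : nat -> nat) :
  (forall b, 0 < f b)%N -> (m <= \sum_(1 <= b < m.+1) f b)%N.
Proof.
move=> f_gt0.
have := @leq_sum _ (index_iota 1 m.+1) xpredT (fun=> 1%N) f (fun b _ => f_gt0 b).
by rewrite sum_nat_const_nat muln1 subn1.
Qed.

Lemma sum_sqrt_le (R : rcfType) m (s : 'I_m -> R) : (forall i, 0 <= s i) ->
  \sum_i Num.sqrt (s i) <= Num.sqrt (m%:R * \sum_i s i).
Proof.
move=> s_ge0; set a := fun i => Num.sqrt (s i).
have sa : \sum_i s i = \sum_i a i ^+ 2 by apply: eq_bigr => i _; rewrite sqr_sqrtr.
have a_ge0 : 0 <= \sum_i a i by apply: sumr_ge0 => i _; exact: sqrtr_ge0.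
rewrite -[X in X <= _](ger0_norm a_ge0) -sqrtr_sqr; apply: ler_wsqrtr.
case: m s s_ge0 a sa a_ge0 => [|m] s s_ge0 a sa a_ge0.
  by rewrite !big_ord0 mul0r expr2 mulr0.
(* Cauchy-Schwarz, from the nonnegative variance of the [a i] around their mean *)
set mu := (\sum_i a i) / m.+1%:R.
have : 0 <= \sum_i (a i - mu) ^+ 2 by apply: sumr_ge0 => i _; exact: sqr_ge0.
have -> : \sum_i (a i - mu) ^+ 2 =
    \sum_i a i ^+ 2 - ((\sum_i a i) * mu) *+ 2 + m.+1%:R * mu ^+ 2.
  under eq_bigr do rewrite sqrrB.
  by rewrite big_split /= sumrB /= sumrMnl -mulr_suml sumr_const card_ord mulr_natl.
have mu_def : m.+1%:R * mu = \sum_i a i by rewrite /mu mulrC divfK // pnatr_eq0.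
rewrite sa mulr2n; move: mu_def (ltr0Sn R m).
move: (m.+1%:R) mu (\sum_i a i) (\sum_i a i ^+ 2) => M mu S1 S2; nra.
Qed.

Section InfoGainBound.
Variable R : realType.

Lemma subr1_le_mul_ln (y : R) : 0 < y -> y - 1 <= y * ln y.
Proof.
move=> y_gt0; have yV_gt0 : 0 < y^-1 by rewrite invr_gt0.
have := @le_ln1Dx R (y^-1 - 1); rewrite (addrC 1) subrK lnV ?posrE //.
move=> /(_ ltac:(lra)) h; have := ler_wpM2l (ltW y_gt0) h.
by rewrite mulrBr mulfV ?gt_eqF // mulr1 mulrN; lra.
Qed.

Lemma mul_ln1DV_le1 (lam : R) : 0 < lam -> lam * ln (1 + lam^-1) <= 1.
Proof.
move=> lam_gt0; have lamV_gt0 : 0 < lam^-1 by rewrite invr_gt0.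
rewrite -[X in _ <= X](mulfV (lt0r_neq0 lam_gt0)) ler_pM2l //; apply: le_ln1Dx; lra.
Qed.

Lemma trace_le_info_gain (lam tr y C : R) : 0 < lam -> 0 <= tr ->
  1 + lam^-1 * tr <= y -> 2^-1 * ln y <= C ->
  tr * ln (1 + lam^-1) <= expR C ^+ 2 * ln y.
Proof.
move=> lam_gt0 tr_ge0 y_ge hC.
have lamV_gt0 : 0 < lam^-1 by rewrite invr_gt0.
have y_ge1 : 1 <= y by have := mulr_ge0 (ltW lamV_gt0) tr_ge0; lra.
have L_gt0 : 0 < ln (1 + lam^-1) by apply: ln_gt0; lra.
have lnE : y <= expR C ^+ 2.
  rewrite -expRM_natl -[y in y <= _]lnK ?posrE ?ler_expR; lra.
have tr_le : tr <= lam * (y - 1).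
  rewrite -(ler_pM2l lamV_gt0) mulrA mulVf ?gt_eqF // mul1r; lra.
have := subr1_le_mul_ln (lt_le_trans ltr01 y_ge1); have := mul_ln1DV_le1 lam_gt0.
have := ln_ge0 y_ge1; move: (ln y) (ln (1 + lam^-1)) (expR C ^+ 2) L_gt0 lnE tr_le.
move=> ly L E2; nra.
Qed.

Lemma sqrt_trace_le (lam tr y C m : R) : 0 < lam -> 0 <= tr -> 0 <= m ->
  1 + lam^-1 * tr <= y -> 2^-1 * ln y <= C ->
  Num.sqrt (m * tr) <= expR C * Num.sqrt (2 / ln (1 + lam^-1) * m * (2^-1 * ln y)).
Proof.
move=> lam_gt0 tr_ge0 m_ge0 y_ge hC.
have L_gt0 : 0 < ln (1 + lam^-1) by apply: ln_gt0; rewrite ltrDl invr_gt0.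
have tr_le := trace_le_info_gain lam_gt0 tr_ge0 y_ge hC.
have E_ge0 := expR_ge0 C.
rewrite -[expR C]ger0_norm // -sqrtr_sqr -sqrtrM ?sqr_ge0 //.
apply: ler_wsqrtr.
rewrite (_ : expR C ^+ 2 * _ = m * (expR C ^+ 2 * ln y / ln (1 + lam^-1))).
  by apply: ler_wpM2l => //; rewrite ler_pdivlMr.
by field; rewrite gt_eqF.
Qed.

End InfoGainBound.

Theorem mainTheorem6
  (R : realType) (X : finType) (d : nat) (emb : X -> 'rV[R]_d) (ell : R)
  (noise : X -> R) (R2 C : R) (T budget : nat)
  (x : nat -> nat -> X) (bt : nat -> nat) :
  injective emb -> 0 < ell ->
  (forall z, 0 < noise z) -> 0 < R2 -> (0 < T)%N ->
  let k := se_kernel emb ell in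
  let lam := 1 + 2 / T%:R in
  (* number of replicates n_t^(b) = ceil(sigma^2(x_t^(b)) / R^2) *)
  let n := fun t b => `|Num.ceil (noise (x t b) / R2)|%N in
  (* stopping rule: b_t + 1 is the first b with sum_{b' <= b} n_t^(b') >= budget *)
  (forall t, (1 <= t)%N ->
     (forall b, (1 <= b <= bt t)%N -> (\sum_(1 <= b' < b.+1) n t b' < budget)%N)
     /\ (budget <= \sum_(1 <= b' < (bt t).+2) n t b')%N) ->
  (* C bounds the information gain of any list of at most budget inputs *)
  (forall t, (1 <= t)%N -> forall A : seq X, (size A <= budget)%N ->
     info_gain k lam (data_before x bt t) A <= C) ->
  let C2 := 2 / ln (1 + lam^-1) in
  forall t, (1 <= t)%N ->
    \sum_(1 <= b < (bt t).+1) post_sd k lam (data_before x bt t) (x t b)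
    <= expR C * Num.sqrt (C2 * (bt t)%:R
                           * info_gain k lam (data_before x bt t) (batch x bt t)).
Proof.
move=> _ ell_gt0 noise_gt0 R2_gt0 _ k lam n stop gain_le C2 t t_ge1.
set D := data_before x bt t; set B := batch x bt t.
pose Sig := post_cov_mx k lam D B.
have lam_gt0 : 0 < lam by have := divr_ge0 (ler0n R 2) (ler0n R T); rewrite /lam; lra.
have kC : forall y z, k y z = k z y := se_kernelC emb ell.
have Sig_psd : psdmx Sig.
  exact: post_cov_mx_psd kC (se_kernel_psd emb (lt0r_neq0 ell_gt0)) lam_gt0 D B.
have Sig_sym : Sig^T = Sig := post_cov_mx_sym lam kC D B.
have size_B : size B = bt t by rewrite size_map size_iota.
have B_le_budget : (size B <= budget)%N.
  rewrite size_B; have [->//|bt_gt0] := posnP (bt t).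
  apply: ltnW (leq_ltn_trans (leq_sum_nat_gt0 _ _) ((stop t t_ge1).1 _ _)).
    by move=> b; rewrite /n absz_gt0 gt_eqF // ceil_gt0 divr_gt0.
  by rewrite bt_gt0 leqnn.
have det_ge : 1 + lam^-1 * \tr Sig <= \det (1%:M + lam^-1 *: Sig).
  rewrite -mxtraceZ; apply: det1D_ge_1Dtr; first by rewrite linearZ /= Sig_sym.
  by apply: psdmxZ; rewrite // invr_ge0 ltW.
have -> : \sum_(1 <= b < (bt t).+1) post_sd k lam D (x t b) =
    \sum_(i < size B) Num.sqrt (Sig i i).
  transitivity (\sum_(b <- B) post_sd k lam D b).
    by rewrite big_map /index_iota subSS subn0.
  rewrite big_tnth.
  by apply: eq_bigr => i _; rewrite /Sig mxE.
apply: le_trans (sum_sqrt_le (fun i => psdmx_diag_ge0 i Sig_psd)) _.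
rewrite -size_B; apply: sqrt_trace_le => //; last exact: gain_le.
exact: sumr_ge0 (fun i _ => psdmx_diag_ge0 i Sig_psd).
Qed.
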